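(* Let $\epsilon\in\mathbb{R}$ and let $w$ be a basic solution of $\mathcal{L}_\epsilon$. Then $w(r,t)\neq 0$ for every $(r,t)\in(0,\infty)\times\mathbb{S}^1$.
   Context: Fix $a>0$, $b\in\mathbb{R}\setminus\{0\}$, $\nu\in[0,1)$, an integer $k\ge 2$ and $c\in C^k(\mathbb{S}^1,\mathbb{C})$ (functions on $\mathbb{S}^1$ are $2\pi$-periodic functions of $t\in\mathbb{R}$). For $\epsilon\in\mathbb{R}$ put $\lambda_\epsilon=a+ib\epsilon$, $L_\epsilon=\lambda_\epsilon\partial_t-ir\partial_r$ on $(0,\infty)\times\mathbb{S}^1$ (coordinates $(r,t)$), and $\mathcal{L}_\epsilon u=L_\epsilon u+i\lambda_\epsilon\nu u-c(t)\bar u$. A basic solution of $\mathcal{L}_\epsilon$ is a nontrivial solution $w$ of $\mathcal{L}_\epsilon w=0$ on $(0,\infty)\times\mathbb{S}^1$ of the form $w(r,t)=r^\sigma\phi(t)+\overline{r^\sigma\psi(t)}$, with $\sigma\in\mathbb{C}$ and $\phi,\psi$ $2\pi$-periodic $\mathbb{C}$-valued functions. *)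

From Stdlib Require Import Reals.
Open Scope R_scope.

Definition Cpx := (R * R)%type.
Definition Re (z : Cpx) : R := fst z.
Definition Im (z : Cpx) : R := snd z.
Definition RtoC (x : R) : Cpx := (x, 0).
Definition C0 : Cpx := (0, 0).
Definition Ci : Cpx := (0, 1).
Definition Cadd (z w : Cpx) : Cpx := (Re z + Re w, Im z + Im w).
Definition Cmul (z w : Cpx) : Cpx :=
  (Re z * Re w - Im z * Im w, Re z * Im w + Im z * Re w).
Definition Cconj (z : Cpx) : Cpx := (Re z, - Im z).
Definition Cexp (z : Cpx) : Cpx := (exp (Re z) * cos (Im z), exp (Re z) * sin (Im z)).

Definition Cpow_pos (r : R) (sigma : Cpx) : Cpx := Cexp (Cmul sigma (RtoC (ln r))).

Definition C_derivable_lim (f : R -> Cpx) (x : R) (d : Cpx) : Prop :=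
  derivable_pt_lim (fun s => Re (f s)) x (Re d) /\
  derivable_pt_lim (fun s => Im (f s)) x (Im d).

Definition C_continuous (f : R -> Cpx) : Prop :=
  continuity (fun s => Re (f s)) /\ continuity (fun s => Im (f s)).

(* Functions on S^1 = 2pi-periodic functions on R. *)
Definition periodic2pi {A : Type} (f : R -> A) : Prop :=
  forall t, f (t + 2 * PI) = f t.

Definition Ck_S1 (k : nat) (c : R -> Cpx) : Prop :=
  periodic2pi c /\
  exists D : nat -> R -> Cpx,
    D 0%nat = c /\
    (forall j, (j < k)%nat -> forall t, C_derivable_lim (D j) t (D (S j) t)) /\
    (forall j, (j <= k)%nat -> C_continuous (D j)).

Definition lam (a b eps : R) : Cpx := (a, b * eps).

(* w : R -> R -> Cpx, w r t, is a (classical) solution of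
   L_eps w = lambda dt w - i r dr w + i lambda nu w - c(t) conj w = 0
   on (0,oo) x S^1: at every point partial derivatives exist and the
   equation holds pointwise. *)
Definition is_solution (a b nu eps : R) (c : R -> Cpx) (w : R -> R -> Cpx) : Prop :=
  forall r t, 0 < r ->
    exists wt wr : Cpx,
      C_derivable_lim (fun s => w r s) t wt /\
      C_derivable_lim (fun s => w s t) r wr /\
      Cadd (Cadd (Cadd (Cmul (lam a b eps) wt)
                       (Cmul (Cmul Ci (RtoC r)) (Cmul (RtoC (-1)) wr)))
                 (Cmul (Cmul Ci (lam a b eps)) (Cmul (RtoC nu) (w r t))))
           (Cmul (RtoC (-1)) (Cmul (c t) (Cconj (w r t)))) = C0.

Definition basic_solution (a b nu eps : R) (c : R -> Cpx) (w : R -> R -> Cpx) : Prop :=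
  is_solution a b nu eps c w /\
  (forall r, 0 < r -> periodic2pi (w r)) /\
  (exists r t, 0 < r /\ w r t <> C0) /\
  exists (sigma : Cpx) (phi psi : R -> Cpx),
    periodic2pi phi /\ periodic2pi psi /\
    forall r t, 0 < r ->
      w r t = Cadd (Cmul (Cpow_pos r sigma) (phi t))
                   (Cconj (Cmul (Cpow_pos r sigma) (psi t))).

From Stdlib Require Import Reals Lra Lia Psatz ZArith ClassicalEpsilon.
Open Scope R_scope.

(* Write w(r, t) = r^sigma phi(t) + conj (r^sigma psi(t)), sigma = x + i y, and
   lambda = a + i beta (beta = b eps).  Suppose w(r0, t0) = 0; we show w = 0,
   contradicting nontriviality.

   - y <> 0.  The slices r = 1 and r = r1 (where r1^sigma is purely imaginary)
     recover phi and psi, and separating the coefficients of r^sigma and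
     conj (r^sigma) in L w = 0 gives a first order system for (phi, psi).
     Along it, D = |phi|^2 - |psi|^2 satisfies
       D' = (2 beta x / N) D - (2 a y / N) (|phi|^2 + |psi|^2),  N = |lambda|^2,
     so y D obeys (y D)' <= k (y D).  Since w(r0, t0) = 0 forces D(t0) = 0 and
     D is periodic, a Gronwall argument on the circle gives D = 0, and then the
     identity gives |phi|^2 + |psi|^2 = 0.
   - y = 0.  Then w(r, t) = r^x h(t), and h solves a linear ODE with continuous
     periodic coefficients, so |h|^2 obeys a Gronwall inequality on a period;
     h(t0) = 0 then gives h = 0. *)

(* Derivative rules in the pointwise form [fun s => f s * g s], which unifies
   with concrete expressions (the library states them with [mult_fct] etc.),
   and a helper to present the computed derivative in a chosen form. *)
Lemma derivable_pt_lim_value (f : R -> R) x l l' :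
  derivable_pt_lim f x l -> l = l' -> derivable_pt_lim f x l'.
Proof. now intros H <-. Qed.

Lemma derivable_pt_lim_mult' (f g : R -> R) x lf lg :
  derivable_pt_lim f x lf -> derivable_pt_lim g x lg ->
  derivable_pt_lim (fun s => f s * g s) x (lf * g x + f x * lg).
Proof. apply derivable_pt_lim_mult. Qed.

Lemma derivable_pt_lim_plus' (f g : R -> R) x lf lg :
  derivable_pt_lim f x lf -> derivable_pt_lim g x lg ->
  derivable_pt_lim (fun s => f s + g s) x (lf + lg).
Proof. apply derivable_pt_lim_plus. Qed.

Lemma derivable_pt_lim_minus' (f g : R -> R) x lf lg :
  derivable_pt_lim f x lf -> derivable_pt_lim g x lg ->
  derivable_pt_lim (fun s => f s - g s) x (lf - lg).
Proof. apply derivable_pt_lim_minus. Qed.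

Lemma derivable_pt_lim_scal' (k : R) (f : R -> R) x l :
  derivable_pt_lim f x l -> derivable_pt_lim (fun s => k * f s) x (k * l).
Proof. apply derivable_pt_lim_scal. Qed.

Lemma derivable_pt_lim_comp' (f g : R -> R) x lf lg :
  derivable_pt_lim f x lf -> derivable_pt_lim g (f x) lg ->
  derivable_pt_lim (fun s => g (f s)) x (lg * lf).
Proof. apply derivable_pt_lim_comp. Qed.

Lemma derivable_pt_lim_lincomb (f g1 g2 : R -> R) k1 k2 s l1 l2 :
  (forall u, f u = k1 * g1 u + k2 * g2 u) ->
  derivable_pt_lim g1 s l1 -> derivable_pt_lim g2 s l2 ->
  derivable_pt_lim f s (k1 * l1 + k2 * l2).
Proof.
  intros Hf H1 H2.
  apply (derivable_pt_lim_ext (fun u => k1 * g1 u + k2 * g2 u)); [now intros |].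
  apply derivable_pt_lim_plus'; apply derivable_pt_lim_scal'; assumption.
Qed.

Lemma derivable_pt_lim_scal_ln k r :
  0 < r -> derivable_pt_lim (fun s => k * ln s) r (k / r).
Proof.
  intros Hr. eapply derivable_pt_lim_value.
  - apply derivable_pt_lim_scal', derivable_pt_lim_ln, Hr.
  - unfold Rdiv; ring.
Qed.

Lemma derivable_pt_lim_exp_scal k s :
  derivable_pt_lim (fun u => exp (k * u)) s (k * exp (k * s)).
Proof.
  eapply derivable_pt_lim_value.
  - apply derivable_pt_lim_comp'.
    + apply derivable_pt_lim_scal', derivable_pt_lim_id.
    + apply derivable_pt_lim_exp.
  - ring.
Qed.

Lemma nonincreasing_of_nonpos_derivative (f : R -> R) u v :
  u <= v ->
  (forall s, u <= s <= v -> exists l, derivable_pt_lim f s l /\ l <= 0) ->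
  f v <= f u.
Proof.
  intros Huv Hder. destruct (Req_dec u v) as [<- | Hne]; [lra |].
  set (f' := fun s => epsilon (inhabits 0)
                        (fun l => derivable_pt_lim f s l /\ l <= 0)).
  assert (Hf' : forall s, u <= s <= v -> derivable_pt_lim f s (f' s) /\ f' s <= 0)
    by (intros s Hs; apply epsilon_spec, Hder, Hs).
  destruct (MVT_cor2 f f' u v) as [s [Hmvt Hs]]; [lra | intros; apply Hf'; lra |].
  assert (f' s <= 0) by (apply Hf'; lra). nra.
Qed.

Lemma exp_weighted_nonincreasing (f : R -> R) k u v :
  u <= v ->
  (forall s, u <= s <= v -> exists l, derivable_pt_lim f s l /\ l <= k * f s) ->
  exp (- k * v) * f v <= exp (- k * u) * f u.
Proof.
  intros Huv Hder.
  apply (nonincreasing_of_nonpos_derivative (fun s => exp (- k * s) * f s)); [lra |].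
  intros s Hs. destruct (Hder s Hs) as [l [Hl Hlk]].
  eexists; split.
  - apply derivable_pt_lim_mult'; [apply derivable_pt_lim_exp_scal | exact Hl].
  - pose proof (exp_pos (- k * s)).
    replace (- k * exp (- k * s) * f s + exp (- k * s) * l)
      with (exp (- k * s) * (l - k * f s)) by ring.
    assert (0 <= exp (- k * s) * (k * f s - l)) by (apply Rmult_le_pos; lra).
    lra.
Qed.

Lemma periodic_window {A : Type} (f : R -> A) :
  periodic2pi f -> forall t0 t, exists t', t0 <= t' <= t0 + 2 * PI /\ f t' = f t.
Proof.
  intros Hper t0 t. pose proof PI_RGT_0 as HPI.
  assert (Hnat : forall n s, f (s + 2 * PI * INR n) = f s).
  { induction n as [| n IH]; intros s; simpl.
    - f_equal; ring.
    - rewrite <- (IH s), <- (Hper (s + 2 * PI * INR n)). f_equal.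
      destruct n; simpl; ring. }
  assert (Hint : forall z s, f (s + 2 * PI * IZR z) = f s).
  { intros z s. destruct (Z_le_gt_dec 0 z).
    - rewrite <- (Z2Nat.id z), <- INR_IZR_INZ by lia. apply Hnat.
    - replace z with (- Z.of_nat (Z.to_nat (- z)))%Z by lia.
      rewrite opp_IZR, <- INR_IZR_INZ.
      rewrite <- (Hnat (Z.to_nat (- z)) (s + 2 * PI * - INR (Z.to_nat (- z)))).
      f_equal; ring. }
  set (q := (t - t0) / (2 * PI)).
  destruct (archimed q) as [Hup1 Hup2].
  exists (t + 2 * PI * IZR (1 - up q)). split.
  - rewrite minus_IZR.
    assert (Hq : t - t0 = 2 * PI * q) by (unfold q; field; lra).
    split; nra.
  - apply Hint.
Qed.

Lemma periodic_gronwall_vanishing (f : R -> R) k t0 :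
  periodic2pi f -> f t0 = 0 ->
  (forall s, t0 <= s <= t0 + 2 * PI ->
     exists l, derivable_pt_lim f s l /\ l <= k * f s) ->
  forall t, f t = 0.
Proof.
  intros Hper Hzero Hder t. pose proof PI_RGT_0 as HPI.
  destruct (periodic_window f Hper t0 t) as [s [Hs <-]].
  assert (Hleft : exp (- k * s) * f s <= 0).
  { rewrite <- (Rmult_0_r (exp (- k * t0))), <- Hzero.
    apply exp_weighted_nonincreasing; [lra | intros; apply Hder; lra]. }
  assert (Hright : 0 <= exp (- k * s) * f s).
  { rewrite <- (Rmult_0_r (exp (- k * (t0 + 2 * PI)))), <- Hzero,
      <- (Hper t0).
    apply exp_weighted_nonincreasing; [lra | intros; apply Hder; lra]. }
  pose proof (exp_pos (- k * s)).
  destruct (Rmult_integral (exp (- k * s)) (f s)); lra.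
Qed.

Definition Cnorm2 (z : Cpx) : R := Re z * Re z + Im z * Im z.

Lemma Cnorm2_nonneg z : 0 <= Cnorm2 z.
Proof. unfold Cnorm2. nra. Qed.

Lemma Cnorm2_eq0 z : Cnorm2 z = 0 -> z = C0.
Proof.
  destruct z as [u v]. unfold Cnorm2, Re, Im, C0; simpl. intros H.
  assert (u = 0) by nra. assert (v = 0) by nra. now subst.
Qed.

Definition pow_re (x y r : R) : R := exp (x * ln r) * cos (y * ln r).
Definition pow_im (x y r : R) : R := exp (x * ln r) * sin (y * ln r).

Lemma Cpow_pos_components r x y : Cpow_pos r (x, y) = (pow_re x y r, pow_im x y r).
Proof.
  unfold Cpow_pos, Cexp, Cmul, RtoC, Re, Im, pow_re, pow_im; simpl.
  f_equal; f_equal; f_equal; ring.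
Qed.

Lemma pow_at_1 x y : pow_re x y 1 = 1 /\ pow_im x y 1 = 0.
Proof.
  unfold pow_re, pow_im. rewrite ln_1, !Rmult_0_r, exp_0, cos_0, sin_0. lra.
Qed.

Lemma Cnorm2_Cpow_pos_pos r sigma : 0 < Cnorm2 (Cpow_pos r sigma).
Proof.
  destruct sigma as [x y]. rewrite Cpow_pos_components.
  unfold Cnorm2, Re, Im, pow_re, pow_im; simpl.
  pose proof (exp_pos (x * ln r)). pose proof (sin2_cos2 (y * ln r)).
  unfold Rsqr in *. nra.
Qed.

Lemma pow_re_derivative x y r :
  0 < r -> derivable_pt_lim (pow_re x y) r ((x * pow_re x y r - y * pow_im x y r) / r).
Proof.
  intros Hr. unfold pow_re, pow_im. eapply derivable_pt_lim_value.
  - apply derivable_pt_lim_mult'.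
    + apply derivable_pt_lim_comp'; [apply derivable_pt_lim_scal_ln, Hr | apply derivable_pt_lim_exp].
    + apply derivable_pt_lim_comp'; [apply derivable_pt_lim_scal_ln, Hr | apply derivable_pt_lim_cos].
  - cbv beta. field. lra.
Qed.

Lemma pow_im_derivative x y r :
  0 < r -> derivable_pt_lim (pow_im x y) r ((x * pow_im x y r + y * pow_re x y r) / r).
Proof.
  intros Hr. unfold pow_re, pow_im. eapply derivable_pt_lim_value.
  - apply derivable_pt_lim_mult'.
    + apply derivable_pt_lim_comp'; [apply derivable_pt_lim_scal_ln, Hr | apply derivable_pt_lim_exp].
    + apply derivable_pt_lim_comp'; [apply derivable_pt_lim_scal_ln, Hr | apply derivable_pt_lim_sin].
  - cbv beta. field. lra.
Qed.

Lemma basic_components z P U :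
  Cadd (Cmul z P) (Cconj (Cmul z U)) =
  (Re z * (Re P + Re U) - Im z * (Im P + Im U),
   Re z * (Im P - Im U) + Im z * (Re P - Re U)).
Proof.
  destruct z, P, U. unfold Cadd, Cmul, Cconj, Re, Im; simpl. f_equal; ring.
Qed.

Lemma balanced_moduli z P U :
  0 < Cnorm2 z -> Cadd (Cmul z P) (Cconj (Cmul z U)) = C0 -> Cnorm2 P = Cnorm2 U.
Proof.
  rewrite basic_components. unfold C0, Cnorm2. intros Hz E. injection E as E1 E2.
  set (z1 := Re z) in *. set (z2 := Im z) in *.
  set (P1 := Re P) in *. set (P2 := Im P) in *.
  set (U1 := Re U) in *. set (U2 := Im U) in *.
  assert (Hid : (z1 * z1 + z2 * z2) * (P1 * P1 + P2 * P2 - U1 * U1 - U2 * U2) =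
    (z1 * P1 - z2 * P2) ^ 2 + (z1 * P2 + z2 * P1) ^ 2
    - (z1 * U1 - z2 * U2) ^ 2 - (z1 * U2 + z2 * U1) ^ 2) by ring.
  replace (z1 * P1 - z2 * P2) with (- (z1 * U1 - z2 * U2)) in Hid by lra.
  replace (z1 * P2 + z2 * P1) with (z1 * U2 + z2 * U1) in Hid by lra.
  assert (H0 : (z1 * z1 + z2 * z2) * (P1 * P1 + P2 * P2 - U1 * U1 - U2 * U2) = 0)
    by (rewrite Hid; ring).
  destruct (Rmult_integral _ _ H0); lra.
Qed.

(* [L_eps] depends on [b] and [eps] only through [b * eps], so we may work
   with [eps = 1] and [beta = b * eps]. *)
Lemma is_solution_rescale a b nu eps c w :
  is_solution a b nu eps c w -> is_solution a (b * eps) nu 1 c w.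
Proof.
  unfold is_solution. now replace (lam a (b * eps) 1) with (lam a b eps)
    by (unfold lam; f_equal; ring).
Qed.

Lemma solution_components a beta nu c w r t :
  is_solution a beta nu 1 c w -> 0 < r ->
  exists t1 t2 d1 d2,
    derivable_pt_lim (fun s => Re (w r s)) t t1 /\
    derivable_pt_lim (fun s => Im (w r s)) t t2 /\
    derivable_pt_lim (fun s => Re (w s t)) r d1 /\
    derivable_pt_lim (fun s => Im (w s t)) r d2 /\
    a * t1 - beta * t2 + r * d2
      - (beta * nu + Re (c t)) * Re (w r t) - (a * nu + Im (c t)) * Im (w r t) = 0 /\
    a * t2 + beta * t1 - r * d1
      - (beta * nu - Re (c t)) * Im (w r t) + (a * nu - Im (c t)) * Re (w r t) = 0.
Proof.
  intros Hsol Hr.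
  destruct (Hsol r t Hr) as [[t1 t2] [[d1 d2] [[Ht1 Ht2] [[Hd1 Hd2] E]]]].
  exists t1, t2, d1, d2. repeat split; auto;
    [apply (f_equal fst) in E | apply (f_equal snd) in E];
    unfold Cadd, Cmul, Cconj, Re, Im, RtoC, Ci, lam, C0 in *; simpl in *; lra.
Qed.

Definition has_basic_form (x y : R) (phi psi : R -> Cpx) (w : R -> R -> Cpx) : Prop :=
  forall r t, 0 < r ->
    w r t = Cadd (Cmul (Cpow_pos r (x, y)) (phi t)) (Cconj (Cmul (Cpow_pos r (x, y)) (psi t))).

(* Radial derivative of a basic profile: [r d/dr (r^sigma) = sigma r^sigma]. *)
Lemma basic_radial_derivative x y phi psi w r t d1 d2 :
  has_basic_form x y phi psi w -> 0 < r ->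
  derivable_pt_lim (fun s => Re (w s t)) r d1 ->
  derivable_pt_lim (fun s => Im (w s t)) r d2 ->
  let e1 := pow_re x y r in let e2 := pow_im x y r in
  r * d1 = (x * e1 - y * e2) * (Re (phi t) + Re (psi t))
           - (x * e2 + y * e1) * (Im (phi t) + Im (psi t)) /\
  r * d2 = (x * e1 - y * e2) * (Im (phi t) - Im (psi t))
           + (x * e2 + y * e1) * (Re (phi t) - Re (psi t)).
Proof.
  intros Hw Hr Hd1 Hd2 e1 e2.
  assert (Hloc : forall z, 0 < z < 2 * r ->
            w z t = (pow_re x y z * (Re (phi t) + Re (psi t))
                     - pow_im x y z * (Im (phi t) + Im (psi t)),
                     pow_re x y z * (Im (phi t) - Im (psi t))
                     + pow_im x y z * (Re (phi t) - Re (psi t)))).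
  { intros z Hz. rewrite Hw, basic_components, Cpow_pos_components by lra. reflexivity. }
  assert (Hr2 : 0 < r < 2 * r) by lra.
  assert (Hre : derivable_pt_lim (fun s => Re (w s t)) r
     ((x * e1 - y * e2) / r * (Re (phi t) + Re (psi t))
      - (x * e2 + y * e1) / r * (Im (phi t) + Im (psi t)))).
  { eapply derivable_pt_lim_locally_ext;
      [exact Hr2 | intros z Hz; rewrite (Hloc z Hz); reflexivity |].
    apply derivable_pt_lim_minus'; apply derivable_pt_lim_scal_right;
      [apply pow_re_derivative | apply pow_im_derivative]; exact Hr. }
  assert (Him : derivable_pt_lim (fun s => Im (w s t)) r
     ((x * e1 - y * e2) / r * (Im (phi t) - Im (psi t))
      + (x * e2 + y * e1) / r * (Re (phi t) - Re (psi t)))).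
  { eapply derivable_pt_lim_locally_ext;
      [exact Hr2 | intros z Hz; rewrite (Hloc z Hz); reflexivity |].
    apply derivable_pt_lim_plus'; apply derivable_pt_lim_scal_right;
      [apply pow_re_derivative | apply pow_im_derivative]; exact Hr. }
  rewrite (uniqueness_limite _ _ _ _ Hd1 Hre), (uniqueness_limite _ _ _ _ Hd2 Him).
  split; field; lra.
Qed.

Section NonrealExponent.

Variables (a beta nu x y : R) (c : R -> Cpx) (w : R -> R -> Cpx) (phi psi : R -> Cpx).
Hypothesis Ha : 0 < a.
Hypothesis Hy : y <> 0.
Hypothesis Hsol : is_solution a beta nu 1 c w.
Hypothesis Hw : has_basic_form x y phi psi w.

(* At [r1 = exp (pi / 2y)] the power [r1 ^ sigma] is purely imaginary, [i m]. *)
Let r1 := exp (PI / (2 * y)).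
Let m := exp (x * PI / (2 * y)).

Lemma pow_at_r1 : pow_re x y r1 = 0 /\ pow_im x y r1 = m.
Proof.
  unfold pow_re, pow_im, r1, m. rewrite ln_exp.
  replace (y * (PI / (2 * y))) with (PI / 2) by (field; exact Hy).
  replace (x * (PI / (2 * y))) with (x * PI / (2 * y)) by (field; exact Hy).
  rewrite cos_PI2, sin_PI2. lra.
Qed.

(* The slices [r = 1] and [r = r1] determine [phi] and [psi]. *)
Lemma slice_1 s :
  w 1 s = (Re (phi s) + Re (psi s), Im (phi s) - Im (psi s)).
Proof.
  destruct (pow_at_1 x y) as [E1 E2].
  rewrite Hw, basic_components, Cpow_pos_components by lra; simpl.
  rewrite E1, E2. f_equal; ring.
Qed.

Lemma slice_r1 s :
  w r1 s = (- m * (Im (phi s) + Im (psi s)), m * (Re (phi s) - Re (psi s))).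
Proof.
  destruct pow_at_r1 as [E1 E2].
  rewrite Hw, basic_components, Cpow_pos_components by apply exp_pos; simpl.
  rewrite E1, E2. f_equal; ring.
Qed.

Lemma slice_equations s :
  let P1 := Re (phi s) in let P2 := Im (phi s) in
  let U1 := Re (psi s) in let U2 := Im (psi s) in
  let c1 := Re (c s) in let c2 := Im (c s) in
  exists t1 t2 t1' t2',
    derivable_pt_lim (fun s => Re (w 1 s)) s t1 /\
    derivable_pt_lim (fun s => Im (w 1 s)) s t2 /\
    derivable_pt_lim (fun s => Re (w r1 s)) s t1' /\
    derivable_pt_lim (fun s => Im (w r1 s)) s t2' /\
    a * t1 - beta * t2 =
      - (x * (P2 - U2) + y * (P1 - U1)) + (beta * nu + c1) * (P1 + U1)
      + (a * nu + c2) * (P2 - U2) /\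
    a * t2 + beta * t1 =
      x * (P1 + U1) - y * (P2 + U2) + (beta * nu - c1) * (P2 - U2)
      - (a * nu - c2) * (P1 + U1) /\
    a * t1' - beta * t2' = m * (
      - (x * (P1 - U1) - y * (P2 - U2)) - (beta * nu + c1) * (P2 + U2)
      + (a * nu + c2) * (P1 - U1)) /\
    a * t2' + beta * t1' = m * (
      - y * (P1 + U1) - x * (P2 + U2) + (beta * nu - c1) * (P1 - U1)
      + (a * nu - c2) * (P2 + U2)).
Proof.
  intros P1 P2 U1 U2 c1 c2.
  assert (Hr1 : 0 < r1) by apply exp_pos.
  destruct (solution_components _ _ _ _ _ 1 s Hsol Rlt_0_1)
    as [t1 [t2 [d1 [d2 [Ht1 [Ht2 [Hd1 [Hd2 [Q1 Q2]]]]]]]]].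
  destruct (solution_components _ _ _ _ _ r1 s Hsol Hr1)
    as [t1' [t2' [d1' [d2' [Ht1' [Ht2' [Hd1' [Hd2' [Q3 Q4]]]]]]]]].
  pose proof (basic_radial_derivative _ _ _ _ _ _ _ _ _ Hw Rlt_0_1 Hd1 Hd2) as R1.
  pose proof (basic_radial_derivative _ _ _ _ _ _ _ _ _ Hw Hr1 Hd1' Hd2') as Rr1.
  cbv zeta in R1, Rr1.
  destruct (pow_at_1 x y) as [E1 E2]. destruct pow_at_r1 as [F1 F2].
  rewrite E1, E2 in R1. rewrite F1, F2 in Rr1.
  destruct R1 as [D1 D2]. destruct Rr1 as [D1' D2'].
  rewrite slice_1 in Q1, Q2. rewrite slice_r1 in Q3, Q4.
  unfold Re, Im in Q1, Q2, Q3, Q4; simpl in Q1, Q2, Q3, Q4.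
  fold (Re (phi s)) (Im (phi s)) (Re (psi s)) (Im (psi s)) (Re (c s)) (Im (c s))
    in Q1, Q2, Q3, Q4.
  fold P1 P2 U1 U2 c1 c2 in Q1, Q2, Q3, Q4, D1, D2, D1', D2'.
  exists t1, t2, t1', t2'. repeat split; auto; lra.
Qed.

(* Separating the coefficients of [r^sigma] and [conj (r^sigma)] in [L w = 0]
   gives the first order system
     lambda phi'       = i (sigma - lambda nu) phi + c psi,
     lambda conj psi'  = i (conj sigma - lambda nu) conj psi + c conj phi,
   written here in real components. *)
Lemma coefficient_system s :
  let P1 := Re (phi s) in let P2 := Im (phi s) in
  let U1 := Re (psi s) in let U2 := Im (psi s) in
  let c1 := Re (c s) in let c2 := Im (c s) in
  exists p1 p2 u1 u2,
    derivable_pt_lim (fun s => Re (phi s)) s p1 /\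
    derivable_pt_lim (fun s => Im (phi s)) s p2 /\
    derivable_pt_lim (fun s => Re (psi s)) s u1 /\
    derivable_pt_lim (fun s => Im (psi s)) s u2 /\
    a * p1 - beta * p2 = (beta * nu - y) * P1 - (x - a * nu) * P2 + c1 * U1 - c2 * U2 /\
    a * p2 + beta * p1 = (beta * nu - y) * P2 + (x - a * nu) * P1 + c1 * U2 + c2 * U1 /\
    a * u1 + beta * u2 = (y + beta * nu) * U1 + (x - a * nu) * U2 + c1 * P1 + c2 * P2 /\
    beta * u1 - a * u2 = (x - a * nu) * U1 - (y + beta * nu) * U2 + c2 * P1 - c1 * P2.
Proof.
  intros P1 P2 U1 U2 c1 c2.
  assert (Hm : 0 < m) by apply exp_pos.
  pose proof (slice_equations s) as Hslice. cbv zeta in Hslice.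
  fold P1 P2 U1 U2 c1 c2 in Hslice.
  destruct Hslice as [t1 [t2 [t1' [t2' [Ht1 [Ht2 [Ht1' [Ht2' [K1 [K2 [K3 K4]]]]]]]]]]].
  (* phi and psi are real-linear combinations of the two slices. *)
  assert (Hslices : forall u,
            Re (w 1 u) = Re (phi u) + Re (psi u) /\ Im (w 1 u) = Im (phi u) - Im (psi u) /\
            Re (w r1 u) = - m * (Im (phi u) + Im (psi u)) /\
            Im (w r1 u) = m * (Re (phi u) - Re (psi u)))
    by (intros u; rewrite slice_1, slice_r1; unfold Re, Im; simpl; lra).
  exists (/ 2 * t1 + / (2 * m) * t2'), (/ 2 * t2 + - / (2 * m) * t1'),
         (/ 2 * t1 + - / (2 * m) * t2'), (- / 2 * t2 + - / (2 * m) * t1').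
  repeat split.
  - eapply derivable_pt_lim_lincomb; [| exact Ht1 | exact Ht2']. intros u; cbv beta.
    destruct (Hslices u) as [S1 [S2 [S3 S4]]]. rewrite ?S1, ?S2, ?S3, ?S4. field. lra.
  - eapply derivable_pt_lim_lincomb; [| exact Ht2 | exact Ht1']. intros u; cbv beta.
    destruct (Hslices u) as [S1 [S2 [S3 S4]]]. rewrite ?S1, ?S2, ?S3, ?S4. field. lra.
  - eapply derivable_pt_lim_lincomb; [| exact Ht1 | exact Ht2']. intros u; cbv beta.
    destruct (Hslices u) as [S1 [S2 [S3 S4]]]. rewrite ?S1, ?S2, ?S3, ?S4. field. lra.
  - eapply derivable_pt_lim_lincomb; [| exact Ht2 | exact Ht1']. intros u; cbv beta.
    destruct (Hslices u) as [S1 [S2 [S3 S4]]]. rewrite ?S1, ?S2, ?S3, ?S4. field. lra.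
  - replace (a * (/ 2 * t1 + / (2 * m) * t2') - beta * (/ 2 * t2 + - / (2 * m) * t1'))
      with (/ 2 * (a * t1 - beta * t2) + / (2 * m) * (a * t2' + beta * t1')) by (field; lra).
    rewrite K1, K4. field. lra.
  - replace (a * (/ 2 * t2 + - / (2 * m) * t1') + beta * (/ 2 * t1 + / (2 * m) * t2'))
      with (/ 2 * (a * t2 + beta * t1) - / (2 * m) * (a * t1' - beta * t2')) by (field; lra).
    rewrite K2, K3. field. lra.
  - replace (a * (/ 2 * t1 + - / (2 * m) * t2') + beta * (- / 2 * t2 + - / (2 * m) * t1'))
      with (/ 2 * (a * t1 - beta * t2) - / (2 * m) * (a * t2' + beta * t1')) by (field; lra).
    rewrite K1, K4. field. lra.
  - replace (beta * (/ 2 * t1 + - / (2 * m) * t2') - a * (- / 2 * t2 + - / (2 * m) * t1'))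
      with (/ 2 * (a * t2 + beta * t1) + / (2 * m) * (a * t1' - beta * t2')) by (field; lra).
    rewrite K2, K3. field. lra.
Qed.

Let N := a * a + beta * beta.

Lemma modulus_gap_derivative s :
  derivable_pt_lim (fun s => Cnorm2 (phi s) - Cnorm2 (psi s)) s
    (2 * beta * x / N * (Cnorm2 (phi s) - Cnorm2 (psi s))
     - 2 * a * y / N * (Cnorm2 (phi s) + Cnorm2 (psi s))).
Proof.
  assert (HN : 0 < N) by (unfold N; nra).
  pose proof (coefficient_system s) as Hsys. cbv zeta in Hsys.
  destruct Hsys as [p1 [p2 [u1 [u2 [Hp1 [Hp2 [Hu1 [Hu2 [E1 [E2 [E3 E4]]]]]]]]]]].
  unfold Cnorm2. eapply derivable_pt_lim_value.
  { apply derivable_pt_lim_minus'; apply derivable_pt_lim_plus';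
      apply derivable_pt_lim_mult'; eassumption. }
  (* Solve the system for the derivatives (its determinant is N). *)
  assert (Np1 : N * p1 = a * (a * p1 - beta * p2) + beta * (a * p2 + beta * p1))
    by (unfold N; ring).
  assert (Np2 : N * p2 = a * (a * p2 + beta * p1) - beta * (a * p1 - beta * p2))
    by (unfold N; ring).
  assert (Nu1 : N * u1 = a * (a * u1 + beta * u2) + beta * (beta * u1 - a * u2))
    by (unfold N; ring).
  assert (Nu2 : N * u2 = beta * (a * u1 + beta * u2) - a * (beta * u1 - a * u2))
    by (unfold N; ring).
  rewrite E1, E2 in Np1, Np2. rewrite E3, E4 in Nu1, Nu2.
  apply (Rmult_eq_reg_l N); [| lra].
  transitivity (2 * (Re (phi s) * (N * p1) + Im (phi s) * (N * p2)
                     - Re (psi s) * (N * u1) - Im (psi s) * (N * u2))); [ring |].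
  rewrite Np1, Np2, Nu1, Nu2. unfold N in HN |- *. field. lra.
Qed.

Hypothesis Hphi : periodic2pi phi.
Hypothesis Hpsi : periodic2pi psi.

(* For a non-real exponent: [y e^{-k s} (|phi|^2 - |psi|^2)] is nonincreasing,
   periodic, and vanishes where [w] does; hence [|phi| = |psi|] everywhere. *)
Lemma modulus_gap_vanishes r0 t0 :
  0 < r0 -> w r0 t0 = C0 -> forall s, Cnorm2 (phi s) - Cnorm2 (psi s) = 0.
Proof.
  intros Hr0 Hz.
  assert (HN : 0 < N) by (unfold N; nra).
  assert (Hy2 : 0 < y * y) by (destruct (Rtotal_order y 0) as [| []]; nra).
  set (gap := fun s => Cnorm2 (phi s) - Cnorm2 (psi s)).
  assert (Hgap0 : gap t0 = 0).
  { unfold gap. rewrite (balanced_moduli (Cpow_pos r0 (x, y)) (phi t0) (psi t0)); [ring | |].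
    - apply Cnorm2_Cpow_pos_pos.
    - rewrite <- Hw by exact Hr0. exact Hz. }
  assert (Hyg : forall s, y * gap s = 0).
  { apply (periodic_gronwall_vanishing (fun s => y * gap s) (2 * beta * x / N) t0).
    - intros s. unfold gap. now rewrite Hphi, Hpsi.
    - rewrite Hgap0. ring.
    - intros s _. eexists; split.
      + apply derivable_pt_lim_scal', modulus_gap_derivative.
      + pose proof (Cnorm2_nonneg (phi s)). pose proof (Cnorm2_nonneg (psi s)).
        assert (0 <= 2 * a * (y * y) / N * (Cnorm2 (phi s) + Cnorm2 (psi s))).
        { apply Rmult_le_pos; [| lra].
          apply Rmult_le_pos; [nra | left; now apply Rinv_0_lt_compat]. }
        unfold gap. replace (y * (2 * beta * x / N * (Cnorm2 (phi s) - Cnorm2 (psi s))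
          - 2 * a * y / N * (Cnorm2 (phi s) + Cnorm2 (psi s))))
          with (2 * beta * x / N * (y * (Cnorm2 (phi s) - Cnorm2 (psi s)))
                - 2 * a * (y * y) / N * (Cnorm2 (phi s) + Cnorm2 (psi s))) by (field; lra).
        lra. }
  intros s. destruct (Rmult_integral _ _ (Hyg s)); [lra | assumption].
Qed.

(* Once [|phi| = |psi|], the derivative identity forces
   [|phi|^2 + |psi|^2 = 0], so [phi = psi = 0] and [w = 0]. *)
Lemma nonreal_exponent_vanishing r0 t0 :
  0 < r0 -> w r0 t0 = C0 -> forall r t, 0 < r -> w r t = C0.
Proof.
  intros Hr0 Hz.
  pose proof (modulus_gap_vanishes r0 t0 Hr0 Hz) as Hgap.
  assert (HN : 0 < N) by (unfold N; nra).
  assert (Hzero : forall s, phi s = C0 /\ psi s = C0).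
  { intros s.
    assert (Hconst : derivable_pt_lim (fun s => Cnorm2 (phi s) - Cnorm2 (psi s)) s 0).
    { apply (derivable_pt_lim_ext (fun _ => 0)); [intros; now rewrite Hgap |].
      apply derivable_pt_lim_const. }
    pose proof (uniqueness_limite _ _ _ _ (modulus_gap_derivative s) Hconst) as Hd.
    rewrite Hgap in Hd.
    pose proof (Cnorm2_nonneg (phi s)). pose proof (Cnorm2_nonneg (psi s)).
    assert (Hsum : Cnorm2 (phi s) + Cnorm2 (psi s) = 0).
    { assert (Hcoef : 2 * a * y / N <> 0)
        by (unfold Rdiv; repeat apply Rmult_integral_contrapositive_currified;
            try apply Rinv_neq_0_compat; lra).
      apply (Rmult_eq_reg_l (2 * a * y / N)); [lra | exact Hcoef]. }
    split; apply Cnorm2_eq0; lra. }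
  intros r t Hr. rewrite Hw by exact Hr.
  destruct (Hzero t) as [-> ->]. rewrite basic_components. unfold C0, Re, Im; simpl.
  f_equal; ring.
Qed.

End NonrealExponent.

Lemma linear_system_energy_bound a beta A p1 q1 p2 q2 u1 u2 t1 t2 :
  0 < a * a + beta * beta ->
  Rabs p1 <= A -> Rabs q1 <= A -> Rabs p2 <= A -> Rabs q2 <= A ->
  a * t1 - beta * t2 = p1 * u1 + q1 * u2 ->
  a * t2 + beta * t1 = p2 * u1 + q2 * u2 ->
  2 * (u1 * t1 + u2 * t2) <=
    (4 * (A * A) + (a * a + beta * beta)) / (a * a + beta * beta) * (u1 * u1 + u2 * u2).
Proof.
  intros HN Hp1 Hq1 Hp2 Hq2 E1 E2.
  set (N := a * a + beta * beta) in *.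
  assert (Hsq : forall p, Rabs p <= A -> p * p <= A * A).
  { intros p Hp. pose proof (Rsqr_abs p) as Habs. unfold Rsqr in Habs. rewrite Habs.
    pose proof (Rabs_pos p). apply Rmult_le_compat; lra. }
  assert (Hrow : forall p q, Rabs p <= A -> Rabs q <= A ->
            (p * u1 + q * u2) ^ 2 <= 2 * (A * A) * (u1 * u1 + u2 * u2)).
  { intros p q Hp Hq.
    assert ((p * u1 + q * u2) ^ 2 <= 2 * (p * p) * (u1 * u1) + 2 * (q * q) * (u2 * u2))
      by (pose proof (pow2_ge_0 (p * u1 - q * u2)); nra).
    assert (p * p * (u1 * u1) <= A * A * (u1 * u1))
      by (apply Rmult_le_compat_r; [nra | exact (Hsq p Hp)]).
    assert (q * q * (u2 * u2) <= A * A * (u2 * u2))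
      by (apply Rmult_le_compat_r; [nra | exact (Hsq q Hq)]).
    lra. }
  (* Rotate by conj lambda: [N <h, h'> = <lambda h', lambda h>]. *)
  set (v1 := a * u1 - beta * u2). set (v2 := beta * u1 + a * u2).
  assert (Hdot : N * (u1 * t1 + u2 * t2) = (a * t1 - beta * t2) * v1 + (a * t2 + beta * t1) * v2)
    by (unfold N, v1, v2; ring).
  assert (Hv : v1 * v1 + v2 * v2 = N * (u1 * u1 + u2 * u2)) by (unfold N, v1, v2; ring).
  rewrite E1, E2 in Hdot.
  pose proof (Hrow _ _ Hp1 Hq1). pose proof (Hrow _ _ Hp2 Hq2).
  assert (H1 : 2 * ((p1 * u1 + q1 * u2) * v1) <= (p1 * u1 + q1 * u2) ^ 2 + v1 * v1)
    by (pose proof (pow2_ge_0 (p1 * u1 + q1 * u2 - v1)); nra).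
  assert (H2 : 2 * ((p2 * u1 + q2 * u2) * v2) <= (p2 * u1 + q2 * u2) ^ 2 + v2 * v2)
    by (pose proof (pow2_ge_0 (p2 * u1 + q2 * u2 - v2)); nra).
  apply (Rmult_le_reg_l N); [exact HN |].
  replace (N * ((4 * (A * A) + N) / N * (u1 * u1 + u2 * u2)))
    with ((4 * (A * A) + N) * (u1 * u1 + u2 * u2)) by (field; lra).
  lra.
Qed.

Lemma Rabs_affine_bound u v nu z :
  0 <= nu <= 1 -> Rabs (u + v * nu + z) <= Rabs u + Rabs v + Rabs z.
Proof.
  intros Hnu. eapply Rle_trans; [apply Rabs_triang |].
  eapply Rle_trans; [apply Rplus_le_compat_r, Rabs_triang |].
  rewrite Rabs_mult, (Rabs_pos_eq nu) by lra.
  pose proof (Rabs_pos v). nra.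
Qed.

Section RealExponent.

Variables (a beta nu x : R) (c : R -> Cpx) (w : R -> R -> Cpx) (phi psi : R -> Cpx).
Hypothesis Ha : 0 < a.
Hypothesis Hnu : 0 <= nu < 1.
Hypothesis Hsol : is_solution a beta nu 1 c w.
Hypothesis Hw : has_basic_form x 0 phi psi w.
Hypothesis Hc : C_continuous c.
Hypothesis Hper : periodic2pi (w 1).

Lemma real_exponent_factor r t :
  0 < r -> w r t = (pow_re x 0 r * Re (w 1 t), pow_re x 0 r * Im (w 1 t)).
Proof.
  intros Hr. destruct (pow_at_1 x 0) as [E1 E2].
  assert (E0 : pow_im x 0 r = 0) by (unfold pow_im; rewrite Rmult_0_l, sin_0; ring).
  rewrite !Hw, !basic_components, !Cpow_pos_components by lra.
  unfold Re, Im; simpl. rewrite E1, E2, E0. f_equal; ring.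
Qed.

Lemma profile_equation s :
  let h1 := Re (w 1 s) in let h2 := Im (w 1 s) in
  let c1 := Re (c s) in let c2 := Im (c s) in
  exists t1 t2,
    derivable_pt_lim (fun s => Re (w 1 s)) s t1 /\
    derivable_pt_lim (fun s => Im (w 1 s)) s t2 /\
    a * t1 - beta * t2 = (beta * nu + c1) * h1 + (a * nu - x + c2) * h2 /\
    a * t2 + beta * t1 = (x - a * nu + c2) * h1 + (beta * nu - c1) * h2.
Proof.
  intros h1 h2 c1 c2.
  destruct (solution_components _ _ _ _ _ 1 s Hsol Rlt_0_1)
    as [t1 [t2 [d1 [d2 [Ht1 [Ht2 [Hd1 [Hd2 [Q1 Q2]]]]]]]]].
  pose proof (basic_radial_derivative _ _ _ _ _ _ _ _ _ Hw Rlt_0_1 Hd1 Hd2) as Hrad.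
  cbv zeta in Hrad. destruct (pow_at_1 x 0) as [E1 E2]. rewrite E1, E2 in Hrad.
  destruct Hrad as [D1 D2].
  assert (Hh : h1 = Re (phi s) + Re (psi s) /\ h2 = Im (phi s) - Im (psi s)).
  { unfold h1, h2. rewrite Hw, basic_components, Cpow_pos_components by lra.
    unfold Re, Im; simpl. rewrite E1, E2. lra. }
  destruct Hh as [Hh1 Hh2]. rewrite <- Hh1 in D1. rewrite <- Hh2 in D2.
  exists t1, t2. repeat split; auto; fold h1 h2 c1 c2 in Q1, Q2; lra.
Qed.

Lemma profile_energy_inequality M s :
  Rabs (Re (c s)) + Rabs (Im (c s)) <= M ->
  let A := Rabs x + Rabs a + Rabs beta + M in
  let N := a * a + beta * beta in
  exists l, derivable_pt_lim (fun s => Cnorm2 (w 1 s)) s l /\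
            l <= (4 * (A * A) + N) / N * Cnorm2 (w 1 s).
Proof.
  intros HMs A N.
  assert (Hcoef : forall u v z, Rabs u + Rabs v + Rabs z <= A -> Rabs (u + v * nu + z) <= A).
  { intros u v z H. eapply Rle_trans; [apply Rabs_affine_bound; lra | exact H]. }
  pose proof (profile_equation s) as Hprof. cbv zeta in Hprof.
  destruct Hprof as [t1 [t2 [Ht1 [Ht2 [E1 E2]]]]].
  eexists; split.
  { unfold Cnorm2. apply derivable_pt_lim_plus'; apply derivable_pt_lim_mult'; eassumption. }
  pose proof (Rabs_pos x). pose proof (Rabs_pos a). pose proof (Rabs_pos beta).
  pose proof (Rabs_pos (Re (c s))). pose proof (Rabs_pos (Im (c s))).
  unfold Cnorm2, N. cbv beta.
  replace (t1 * Re (w 1 s) + Re (w 1 s) * t1 + (t2 * Im (w 1 s) + Im (w 1 s) * t2))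
    with (2 * (Re (w 1 s) * t1 + Im (w 1 s) * t2)) by ring.
  apply (linear_system_energy_bound a beta A (beta * nu + Re (c s))
           (a * nu - x + Im (c s)) (x - a * nu + Im (c s)) (beta * nu - Re (c s)));
    try assumption.
  - nra.
  - replace (beta * nu + Re (c s)) with (0 + beta * nu + Re (c s)) by ring.
    apply Hcoef. rewrite Rabs_R0. unfold A; lra.
  - replace (a * nu - x + Im (c s)) with (- x + a * nu + Im (c s)) by ring.
    apply Hcoef. rewrite Rabs_Ropp. unfold A; lra.
  - replace (x - a * nu + Im (c s)) with (x + - a * nu + Im (c s)) by ring.
    apply Hcoef. rewrite Rabs_Ropp. unfold A; lra.
  - replace (beta * nu - Re (c s)) with (0 + beta * nu + - Re (c s)) by ring.
    apply Hcoef. rewrite Rabs_R0, Rabs_Ropp. unfold A; lra.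
Qed.

(* For a real exponent, [|w(1, .)|^2] satisfies a Gronwall inequality on a
   period (where [c] is bounded), is periodic, and vanishes where [w] does;
   hence it vanishes identically, and so does [w]. *)
Lemma real_exponent_vanishing r0 t0 :
  0 < r0 -> w r0 t0 = C0 -> forall r t, 0 < r -> w r t = C0.
Proof.
  intros Hr0 Hz. pose proof PI_RGT_0 as HPI.
  assert (Hg0 : Cnorm2 (w 1 t0) = 0).
  { rewrite real_exponent_factor in Hz by exact Hr0. injection Hz as Z1 Z2.
    assert (0 < pow_re x 0 r0)
      by (unfold pow_re; rewrite Rmult_0_l, cos_0, Rmult_1_r; apply exp_pos).
    destruct (Rmult_integral _ _ Z1), (Rmult_integral _ _ Z2); try lra.
    unfold Cnorm2. nra. }
  destruct Hc as [Hc1 Hc2].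
  destruct (continuity_ab_maj (fun s => Rabs (Re (c s)) + Rabs (Im (c s))) t0 (t0 + 2 * PI))
    as [Mx [HM _]]; [lra | |].
  { intros s _. apply continuity_pt_plus.
    - exact (continuity_pt_comp _ Rabs s (Hc1 s) (Rcontinuity_abs _)).
    - exact (continuity_pt_comp _ Rabs s (Hc2 s) (Rcontinuity_abs _)). }
  set (M := Rabs (Re (c Mx)) + Rabs (Im (c Mx))) in HM.
  assert (Hg : forall t, Cnorm2 (w 1 t) = 0).
  { set (A := Rabs x + Rabs a + Rabs beta + M).
    set (N := a * a + beta * beta).
    apply (periodic_gronwall_vanishing (fun s => Cnorm2 (w 1 s))
             ((4 * (A * A) + N) / N) t0).
    - intros s. now rewrite Hper.
    - exact Hg0.
    - intros s Hs. exact (profile_energy_inequality M s (HM s Hs)). }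
  intros r t Hr. rewrite real_exponent_factor by exact Hr.
  rewrite (Cnorm2_eq0 _ (Hg t)). unfold C0, Re, Im; simpl. f_equal; ring.
Qed.

End RealExponent.

Lemma Ck_S1_continuous k c : Ck_S1 k c -> C_continuous c.
Proof.
  intros [_ [D [HD0 [_ Hcont]]]]. rewrite <- HD0. apply Hcont. lia.
Qed.

Theorem proposition2p1 (a b nu : R) (k : nat) (c : R -> Cpx) (eps : R)
  (w : R -> R -> Cpx) :
  0 < a -> b <> 0 -> 0 <= nu < 1 -> (2 <= k)%nat -> Ck_S1 k c ->
  basic_solution a b nu eps c w ->
  forall r t, 0 < r -> w r t <> C0.
Proof.
  intros Ha _ Hnu _ Hc
    [Hsol [Hper [[r1 [t1 [Hr1 Hne]]] [[x y] [phi [psi [Hphi [Hpsi Hw]]]]]]]]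
    r0 t0 Hr0 Hz.
  apply Hne. apply is_solution_rescale in Hsol.
  destruct (Req_dec y 0) as [-> | Hy].
  - exact (real_exponent_vanishing _ _ _ _ _ _ _ _ Ha Hnu Hsol Hw
             (Ck_S1_continuous _ _ Hc) (Hper 1 Rlt_0_1) r0 t0 Hr0 Hz r1 t1 Hr1).
  - exact (nonreal_exponent_vanishing _ _ _ _ _ _ _ _ _ Ha Hy Hsol Hw Hphi Hpsi
             r0 t0 Hr0 Hz r1 t1 Hr1).
Qed.
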